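(* Let $m,n\ge1$, $N=2^m$, $D=2^{m+2}$, and fix $\mathbf x=(x_1,\dots,x_n)\in\{0,\dots,N-1\}^n$. Let $\mathbf y=(y_1,\dots,y_n)$, $v$ and $v_1,\dots,v_{n-1}$ be independent and uniformly distributed on $\{0,\dots,N-1\}$ (each coordinate), and put $v_n=\big(4v-4\sum_{i=1}^{n-1}v_i \bmod D\big)/4\in\{0,\dots,N-1\}$ (i.e. $v_n\equiv v-\sum_{i<n}v_i\pmod N$). For $i=1,\dots,n$ let $p_i=2x_i+1$, $q_i=2y_i+1$, $s_i=4v_i-2y_i-1\bmod D$ and $M_i=s_i+p_iq_i\bmod D$. Let $M=(M_1,\dots,M_n)$, $X_B=(\mathbf y,v)$ and $u=\sum_{i=1}^n x_iy_i+v\bmod N$. Then the conditional mutual information satisfies $H(M:X_B\mid u)=0$.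
   Context: $H(\cdot:\cdot\mid\cdot)$ is the Shannon conditional mutual information. This models a semi-honest Alice (with input $\mathbf x$) who learns all values $M_i$ in the scalar-product protocol, and $X_B$ is Bob's private input; the conclusion says she learns nothing about $X_B$ beyond the intended output $u$. *)

From mathcomp Require Import all_boot all_order all_algebra.
From mathcomp Require Import reals exp.
Set Implicit Arguments. Unset Strict Implicit. Unset Printing Implicit Defensive.
Import Order.TTheory GRing.Theory Num.Theory.
Local Open Scope ring_scope.

Definition log2 {R : realType} (x : R) : R := ln x / ln 2.

Definition prob {R : realType} {Omega : finType} (E : {set Omega}) : R :=
  #|E|%:R / #|Omega|%:R.

(* Conditional mutual information I(A : B | C) (log base 2), for random variables
   A B C defined on the uniform finite sample space Omega:
     sum_{a,b,c} p(a,b,c) log( p(a,b,c) p(c) / (p(a,c) p(b,c)) ),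
   written as an expectation over the outcomes w (only outcomes of positive
   probability contribute, so 0 log 0 terms never arise). *)
Definition cond_mutual_info {R : realType} {Omega : finType}
    {TA TB TC : eqType} (A : Omega -> TA) (B : Omega -> TB) (C : Omega -> TC) : R :=
  \sum_(w : Omega)
     (#|Omega|%:R)^-1 *
     log2 (prob [set w' | [&& A w' == A w, B w' == B w & C w' == C w]]
           * prob [set w' | C w' == C w]
           / (prob [set w' | (A w' == A w) && (C w' == C w)]
              * prob [set w' | (B w' == B w) && (C w' == C w)])).

(* Sample space: outcome ((y, v), w) with y = (y_1..y_n), v, and
   w = (v_1 .. v_{n-1}), all coordinates in {0..N-1}, N = 2^m; uniform. *)
Notation Omega m n :=
  ({ffun 'I_n -> 'I_(2^m)} * 'I_(2^m) * {ffun 'I_n.-1 -> 'I_(2^m)})%type.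

Definition NN (m : nat) : int := (2 ^ m)%:Z.
Definition DD (m : nat) : int := (2 ^ (m + 2))%:Z.

Definition v_last (m n : nat) (om : Omega m n) : int :=
  (((4 * (om.1.2 : nat)%:Z - 4 * \sum_(j < n.-1) (om.2 j : nat)%:Z) %% DD m)%Z
     %/ 4)%Z.

Definition v_i (m n : nat) (om : Omega m n) (i : 'I_n) : int :=
  if @insub _ (fun k => (k < n.-1)%N) 'I_n.-1 (i : nat) is Some j
  then (om.2 j : nat)%:Z else v_last om.

Definition y_i (m n : nat) (om : Omega m n) (i : 'I_n) : int := (om.1.1 i : nat)%:Z.

Definition msgs (m n : nat) (x : {ffun 'I_n -> 'I_(2^m)}) (om : Omega m n)
  : {ffun 'I_n -> int} :=
  [ffun i => let p := 2 * (x i : nat)%:Z + 1 in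
             let q := 2 * y_i om i + 1 in
             let s := ((4 * v_i om i - 2 * y_i om i - 1) %% DD m)%Z in
             ((s + p * q) %% DD m)%Z].

Definition XB (m n : nat) (om : Omega m n) := (om.1.1, om.1.2).

Definition out_u (m n : nat) (x : {ffun 'I_n -> 'I_(2^m)}) (om : Omega m n) : int :=
  ((\sum_(i < n) (x i : nat)%:Z * y_i om i + (om.1.2 : nat)%:Z) %% NN m)%Z.

From mathcomp Require Import all_boot all_order all_algebra.
From mathcomp Require Import reals exp.
From mathcomp Require Import ring.
Import Order.TTheory GRing.Theory Num.Theory.
Local Open Scope ring_scope.

(* Since (2x+1)(2y+1) + 4v - 2y - 1 = 4(v + xy) + 2x, the message M_i tells
   Alice exactly the share v_i + x_i y_i modulo N, and these shares sum to u
   modulo N.  Conversely, given u, every input (y, v) of Bob produces the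
   observed messages for exactly one choice of the pads v_1, ..., v_{n-1}.
   Hence on each level set of u the counts factorise,
   #{M, X_B} * #{u} = #{M} * #{X_B}, and every term of the conditional mutual
   information is a logarithm of 1. *)

Lemma cond_mutual_info_eq0 (R : realType) (Omega : finType) (TA TB TC : eqType)
    (A : Omega -> TA) (B : Omega -> TB) (C : Omega -> TC) :
  (forall w,
     #|[set w' | [&& A w' == A w, B w' == B w & C w' == C w]]|
       * #|[set w' | C w' == C w]|
     = #|[set w' | (A w' == A w) && (C w' == C w)]|
       * #|[set w' | (B w' == B w) && (C w' == C w)]|)%N ->
  cond_mutual_info (R := R) A B C = 0.
Proof.
move=> hcard; rewrite /cond_mutual_info big1 // => w _.
have card_neq0 (S : {set Omega}) : w \in S -> (#|S|%:R : R) != 0.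
  by move=> Sw; rewrite pnatr_eq0 -lt0n; apply/card_gt0P; exists w.
have cardT_neq0 : (#|Omega|%:R : R) != 0.
  by rewrite pnatr_eq0 -lt0n; apply/card_gt0P; exists w.
rewrite /prob; set k := (#|Omega|%:R : R).
set S1 := [set w' | _]; set S2 := [set w' | C w' == C w].
set S3 := [set w' | _]; set S4 := [set w' | _].
have -> : #|S1|%:R / k * (#|S2|%:R / k) / (#|S3|%:R / k * (#|S4|%:R / k)) = 1.
  rewrite mulrACA [X in _ / X]mulrACA -!natrM hcard divff //.
  by rewrite !mulf_neq0 ?invr_eq0 // natrM mulf_neq0 // card_neq0 // inE !eqxx.
by rewrite /log2 ln1 mul0r mulr0.
Qed.

Section FibredSampleSpace.
Variables (U V : finType) (TA TX TC : eqType).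
Variables (A : U * V -> TA) (X : U * V -> TX) (C : U * V -> TC).
Hypothesis X_fst : forall w w', (X w' == X w) = (w'.1 == w.1).
Hypothesis C_fst : forall u v v', C (u, v) = C (u, v').
Hypothesis A_inj : forall u v v', A (u, v) = A (u, v') -> v = v'.
Hypothesis A_determines_C : forall {w w'}, A w = A w' -> C w = C w'.
Hypothesis A_onto :
  forall {u v u'}, C (u', v) = C (u, v) -> exists v', A (u', v') = A (u, v).

Lemma card_fibres_prod w :
  (#|[set w' | [&& A w' == A w, X w' == X w & C w' == C w]]|
     * #|[set w' | C w' == C w]|
   = #|[set w' | (A w' == A w) && (C w' == C w)]|
     * #|[set w' | (X w' == X w) && (C w' == C w)]|)%N.
Proof.
case: w => u v; set w := (u, v).
set Uc := [set u' | C (u', v) == C w].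
have fibre_AX :
    [set w' | [&& A w' == A w, X w' == X w & C w' == C w]] = [set w].
  apply/setP => -[u' v']; rewrite !inE X_fst /=; apply/idP/eqP.
    by case/and3P => /eqP + /eqP hu; rewrite hu => /A_inj ->.
  by case=> -> ->; rewrite !eqxx.
have fibre_C : [set w' | C w' == C w] = setX Uc [set: V].
  by apply/setP => -[u' v']; rewrite !inE /= andbT (C_fst u' v' v).
have fibre_A :
    [set w' | (A w' == A w) && (C w' == C w)] = [set w' | A w' == A w].
  apply/setP => w'; rewrite !inE andb_idr // => /eqP hA.
  by rewrite (A_determines_C hA).
have fibre_X : [set w' | (X w' == X w) && (C w' == C w)] = pair u @: [set: V].
  apply/setP => -[u' v']; rewrite !inE X_fst /=; apply/idP/imsetP.
    by case/andP => /eqP -> _; exists v'.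
  by case=> v'' _ [-> ->]; rewrite eqxx (C_fst u v'' v) eqxx.
have card_fibre_A : #|[set w' | A w' == A w]| = #|Uc|.
  have -> : Uc = fst @: [set w' | A w' == A w].
    apply/setP => u'; rewrite inE; apply/eqP/imsetP => [hC | [[u'' v''] + ->]].
      by have [v' hv'] := A_onto hC; exists (u', v'); rewrite // inE hv'.
    rewrite inE => /eqP hA /=.
    by rewrite (C_fst u'' v v'') -(A_determines_C hA).
  apply/esym/card_in_imset => -[u1 v1] [u2 v2].
  rewrite !inE => /eqP h1 /eqP h2 /= hu.
  by move: h1; rewrite hu -h2 => /A_inj ->.
rewrite fibre_AX fibre_C fibre_A fibre_X cards1 cardsX card_fibre_A.
by rewrite card_imset ?mul1n //; move=> ? ? [].
Qed.

Lemma cond_mutual_info_fibred (R : realType) :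
  cond_mutual_info (R := R) A X C = 0.
Proof. exact: cond_mutual_info_eq0 card_fibres_prod. Qed.

End FibredSampleSpace.

Lemma ordS_widenVmax {n} (i : 'I_n.+1) :
  (exists j : 'I_n, i = widen_ord (leqnSn n) j) \/ i = ord_max.
Proof.
case: (ltnP i n) => [lt_in | le_ni]; [left | right].
  by exists (Ordinal lt_in); apply: val_inj.
by apply/val_inj/eqP; rewrite /= eqn_leq le_ni -ltnS ltn_ord.
Qed.

Lemma eqz_mod_sum {I : finType} {F G : I -> int} {d : int} :
  (forall i, F i == G i %[mod d])%Z -> (\sum_i F i == \sum_i G i %[mod d])%Z.
Proof.
move=> eqFG; rewrite eqz_mod_dvd -sumrB.
by apply: rpred_sum => i _; rewrite -eqz_mod_dvd.
Qed.

Section ScalarProduct.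
Variables (m n : nat) (x : {ffun 'I_n.+1 -> 'I_(2^m)}).
Local Notation N := (NN m).

Lemma NN_gt0 : 0 < N. Proof. by rewrite /NN ltz_nat expn_gt0. Qed.

Lemma DD_NN : DD m = 4 * N. Proof. by rewrite /DD /NN expnD mulnC PoszM. Qed.

Lemma eqz_mod_ord (a b : 'I_(2^m)) :
  ((a : nat)%:Z == (b : nat)%:Z %[mod N])%Z = (a == b).
Proof. by rewrite !modz_small ?ltz_nat ?ltn_ord. Qed.

Lemma modN_ord_proof (a : int) : (`|(a %% N)%Z| < 2 ^ m)%N.
Proof.
by rewrite -ltz_nat abszE ger0_norm ?ltz_pmod ?modz_ge0 ?gt_eqF ?NN_gt0.
Qed.

Definition modN_ord (a : int) : 'I_(2^m) := Ordinal (modN_ord_proof a).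

Lemma modN_ordE a : (modN_ord a : nat)%:Z = (a %% N)%Z.
Proof. by rewrite /= abszE ger0_norm // modz_ge0 // gt_eqF // NN_gt0. Qed.

Definition share (om : Omega m n.+1) (i : 'I_n.+1) : int :=
  v_i om i + (x i : nat)%:Z * y_i om i.

Lemma msgs_eq_mod (om om' : Omega m n.+1) i :
  (msgs x om i == msgs x om' i) = (share om i == share om' i %[mod N])%Z.
Proof.
rewrite !ffunE /= !modzDml !eqz_mod_dvd DD_NN.
set p := 2 * (x i : nat)%:Z + 1.
have -> : 4 * v_i om i - 2 * y_i om i - 1 + p * (2 * y_i om i + 1)
    - (4 * v_i om' i - 2 * y_i om' i - 1 + p * (2 * y_i om' i + 1))
  = 4 * (share om i - share om' i) by rewrite /share /p; ring.
by rewrite dvdz_mul2l.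
Qed.

Lemma v_i_widen (om : Omega m n.+1) (j : 'I_n) :
  v_i om (widen_ord (leqnSn n) j) = (om.2 j : nat)%:Z.
Proof.
rewrite /v_i; case: insubP => [j' _ /= eq_j | ]; last by rewrite /= ltn_ord.
by congr (Posz (om.2 _)); apply: val_inj.
Qed.

Lemma v_i_max (om : Omega m n.+1) : v_i om ord_max = v_last om.
Proof. by rewrite /v_i; case: insubP => [j | //]; rewrite /= ltnn. Qed.

Lemma v_lastE (om : Omega m n.+1) :
  v_last om = (((om.1.2 : nat)%:Z - \sum_(j < n) (om.2 j : nat)%:Z) %% N)%Z.
Proof. by rewrite /v_last -mulrBr DD_NN -mulz_modr ?mulKz. Qed.

Lemma sum_v_i_mod (om : Omega m n.+1) :
  (\sum_i v_i om i = (om.1.2 : nat)%:Z %[mod N])%Z.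
Proof.
rewrite big_ord_recr /= v_i_max v_lastE modzDmr.
under eq_bigr do rewrite v_i_widen.
by rewrite addrC subrK.
Qed.

Lemma sum_share_mod (om : Omega m n.+1) :
  ((\sum_i share om i) %% N)%Z = out_u x om.
Proof. by rewrite big_split /= -modzDml sum_v_i_mod modzDml addrC. Qed.

Lemma msgs_determine_out (om om' : Omega m n.+1) :
  msgs x om = msgs x om' -> out_u x om = out_u x om'.
Proof.
move=> eq_msgs; rewrite -!sum_share_mod; apply/eqP/eqz_mod_sum => i.
by rewrite -msgs_eq_mod eq_msgs.
Qed.

Lemma msgs_inj bob (vs vs' : {ffun 'I_n -> 'I_(2^m)}) :
  msgs x (bob, vs) = msgs x (bob, vs') -> vs = vs'.
Proof.
move=> eq_msgs; apply/ffunP => j; apply/eqP; rewrite -eqz_mod_ord.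
have := msgs_eq_mod (bob, vs) (bob, vs') (widen_ord (leqnSn n) j).
by rewrite eq_msgs eqxx /share !v_i_widen eqz_modDr => /esym.
Qed.

Lemma msgs_onto bob (vs : {ffun 'I_n -> 'I_(2^m)}) bob' :
  out_u x (bob', vs) = out_u x (bob, vs) ->
  exists vs', msgs x (bob', vs') = msgs x (bob, vs).
Proof.
(* Shift each pad v_j, j < n, to absorb the change of y_j; the last share then
   agrees modulo N because both share vectors sum to u. *)
move=> eq_out; pose w (j : 'I_n) := widen_ord (leqnSn n) j.
exists [ffun j => modN_ord
  (share (bob, vs) (w j) - (x (w j) : nat)%:Z * y_i (bob', vs) (w j))].
set vs' := finfun _.
have share_widen j :
    (share (bob', vs') (w j) == share (bob, vs) (w j) %[mod N])%Z.
  by rewrite {1}/share v_i_widen ffunE modN_ordE modzDml subrK.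
have share_max :
    (share (bob', vs') ord_max == share (bob, vs) ord_max %[mod N])%Z.
  have : ((\sum_i share (bob', vs') i) %% N)%Z
         = ((\sum_i share (bob, vs) i) %% N)%Z.
    by rewrite !sum_share_mod; exact: eq_out.
  rewrite !big_ord_recr /= -modzDml (eqP (eqz_mod_sum share_widen)) modzDml.
  by move/eqP; rewrite eqz_modDl.
apply/ffunP => i; apply/eqP; rewrite msgs_eq_mod.
case: (ordS_widenVmax i) => [[j ->] | ->].
- exact: share_widen.
- exact: share_max.
Qed.

End ScalarProduct.

Theorem lemma4 (R : realType) (m n : nat) (hm : (1 <= m)%N) (hn : (1 <= n)%N)
    (x : {ffun 'I_n -> 'I_(2^m)}) :
  cond_mutual_info (R := R) (msgs x) (@XB m n) (out_u x) = 0.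
Proof.
case: n hn x => [// | n] _ x.
apply: cond_mutual_info_fibred.
- by move=> [[? ?] ?] [[? ?] ?].
- by [].
- exact: msgs_inj.
- exact: msgs_determine_out.
- exact: msgs_onto.
Qed.
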